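(* Let $G$ be a graph, $B\subseteq V(G)$ and $\ell\ge 1$. Then $B$ is a mixed $\ell$-leaky forcing set of $G$ if and only if $B$ is an $(\ell-1)$-leaky forcing set of $G$ such that for every set $L\subseteq V(G)$ of $\ell-1$ vertex leaks and every $v\in V(G)\setminus B$ there exist forces $x\to v$ and $y\to v$ in $\mathcal{F}_L(B)$ with $x\ne y$.
   Context: All graphs are finite, simple and undirected. Zero forcing: a blue vertex $u$ with exactly one white neighbor $w$ may force $w$ (color it blue), written $u\to w$. From an initial blue set $B$, a forcing sequence is a chronologically ordered list of forces each valid when performed. A vertex leak is a vertex not allowed to perform any force; $B$ is an $\ell$-leaky forcing set if for every set of at most $\ell$ vertex leaks, exhaustively applying the forcing rule from $B$ colors all of $V(G)$ blue. For $L\subseteq V(G)$, $\mathcal{F}_L(B)$ is the set of all forces $x\to v$ occurring in some forcing sequence from $B$ in which no vertex of $L$ performs a force. An edge leak is an edge $xy$ across which no force may be performed (neither $x\to y$ nor $y\to x$). A specified leak is an ordered pair $x\to y$ meaning $x$ may not force $y$. A leak is any of these three kinds. $B$ is a mixed $\ell$-leaky forcing set if for every set of at most $\ell$ leaks (of any mix of kinds), exhaustively applying the forcing rule from $B$ subject to the leaks colors all of $V(G)$ blue. *)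

From mathcomp Require Import all_boot.
Set Implicit Arguments. Unset Strict Implicit. Unset Printing Implicit Defensive.

Section ZF.
Variables (T : finType) (e : rel T).

(* A restriction on forces: [ok x w] says x is permitted to force w. *)
Definition valid_force (ok : T -> T -> bool) (S : {set T}) (x w : T) : bool :=
  [&& ok x w, x \in S, w \notin S, e x w &
      [forall y, (e x y && (y \notin S)) ==> (y == w)]].

Fixpoint valid_seq (ok : T -> T -> bool) (S : {set T}) (s : seq (T * T)) : bool :=
  match s with
  | [::] => true
  | (x, w) :: s' => valid_force ok S x w && valid_seq ok (w |: S) s'
  end.

Definition final_set (S : {set T}) (s : seq (T * T)) : {set T} :=
  S :|: [set w | w in map snd s].

Definition exhaustive (ok : T -> T -> bool) (S : {set T}) (s : seq (T * T)) : Prop :=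
  valid_seq ok S s /\ forall x w, ~~ valid_force ok (final_set S s) x w.

Definition forces_all (ok : T -> T -> bool) (B : {set T}) : Prop :=
  forall s, exhaustive ok B s -> final_set B s = setT.

Definition vleak_ok (L : {set T}) (x w : T) : bool := x \notin L.

Definition leaky_forcing_set (l : nat) (B : {set T}) : Prop :=
  forall L : {set T}, #|L| <= l -> forces_all (vleak_ok L) B.

Definition forces_set (L : {set T}) (B : {set T}) (x v : T) : Prop :=
  exists s, valid_seq (vleak_ok L) B s /\ (x, v) \in s.

Inductive leak : Type :=
  | VertexLeak of T
  | EdgeLeak of T & T      (* edge xy: neither x -> y nor y -> x *)
  | SpecLeak of T & T.     (* ordered pair: x may not force y *)

Definition leak_wf (l : leak) : bool :=
  match l with
  | VertexLeak _ => true
  | EdgeLeak x y => e x y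
  | SpecLeak x y => e x y
  end.

Definition leak_blocks (l : leak) (x w : T) : bool :=
  match l with
  | VertexLeak z => x == z
  | EdgeLeak a b => ((x == a) && (w == b)) || ((x == b) && (w == a))
  | SpecLeak a b => (x == a) && (w == b)
  end.

Definition mixed_ok (ls : seq leak) (x w : T) : bool :=
  ~~ has (fun l => leak_blocks l x w) ls.

Definition mixed_leaky_forcing_set (l : nat) (B : {set T}) : Prop :=
  forall ls : seq leak, size ls <= l -> all leak_wf ls ->
    forces_all (mixed_ok ls) B.

End ZF.

From mathcomp Require Import all_boot zify.
Set Implicit Arguments. Unset Strict Implicit. Unset Printing Implicit Defensive.

(* (=>) Vertex leaks are particular mixed leaks, so B is (l-1)-leaky.  For
   l-1 vertex leaks L and v outside B, an exhaustive sequence colours v by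
   some force x -> v; adding the specified leak x -> v to L gives l mixed
   leaks, so v is still coloured, now by a force y -> v with y <> x, and the
   sequence respects the vertex leaks L.

   (<=) Let s be exhaustive under a list of at most l mixed leaks, with final
   blue set W.  Each leak that blocks a force leaving W is charged to the
   vertex trying to perform it; with L the set of charged vertices, W is
   stalled under the vertex leaks L and |L| <= l.  A stalled set containing
   B contains everything forced from B, so if |L| <= l-1 then W is the whole
   vertex set.  If |L| = l, remove one z from L: a sequence under L \ z must
   leave W, and its first exit is z forcing its unique neighbour v0 outside
   W.  Hence z is the only vertex forcing v0 under L \ z, contradicting the
   doubled-forces hypothesis applied to L \ z and v0. *)

Section ForcingSequences.
Variables (T : finType) (e : rel T).
Implicit Types (ok : T -> T -> bool) (B S W L : {set T}) (s : seq (T * T)).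

Lemma mem_final_set S s v : (v \in final_set S s) = (v \in S) || (v \in map snd s).
Proof.
rewrite /final_set inE; congr (_ || _).
by apply/imsetP/idP => [[w Hw ->]|Hv]; [|exists v].
Qed.

Lemma final_set_nil S : final_set S [::] = S.
Proof. by apply/setP => v; rewrite mem_final_set orbF. Qed.

Lemma final_set_cons S x w s : final_set S ((x, w) :: s) = final_set (w |: S) s.
Proof.
by apply/setP => v; rewrite !mem_final_set /= !inE; case: (v == w); rewrite ?orbT.
Qed.

Lemma sub_final_set S s : S \subset final_set S s.
Proof. by apply/subsetP => v Hv; rewrite mem_final_set Hv. Qed.

Lemma forces_all_ext ok1 ok2 B : ok1 =2 ok2 ->
  forces_all e ok1 B -> forces_all e ok2 B.
Proof.
move=> Hok Hall s [Hs Hstop].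
have Hseq S t : valid_seq e ok1 S t = valid_seq e ok2 S t.
  by elim: t S => [//|[x w] t IH] S /=; rewrite /valid_force Hok IH.
apply: Hall; split=> [|x w]; first by rewrite Hseq.
by rewrite /valid_force Hok; apply: Hstop.
Qed.

Lemma valid_seq_mono ok1 ok2 S s : (forall x w, ok1 x w -> ok2 x w) ->
  valid_seq e ok1 S s -> valid_seq e ok2 S s.
Proof.
move=> Hok; elim: s S => [//|[x w] s IH] S /= /andP[Hf Hs].
rewrite IH // andbT; move: Hf; rewrite /valid_force => /andP[Hxw ->].
by rewrite Hok.
Qed.

Lemma valid_seq_mem ok S s x w : valid_seq e ok S s -> (x, w) \in s ->
  [/\ ok x w, e x w & w \notin S].
Proof.
elim: s S => [//|[a b] s IH] S /= /andP[Hf Hs].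
rewrite in_cons => /orP[/eqP [-> ->]|Hin]; first by case/and5P: Hf.
by have [Hok Hxw] := IH _ Hs Hin; rewrite inE negb_or => /andP[_ Hw].
Qed.

(* Forcing greedily until no force applies terminates, since each force
   colours a new vertex. *)
Lemma exists_exhaustive ok S : exists s, exhaustive e ok S s.
Proof.
move: {2}#|~: S| (leqnn #|~: S|) => n; elim: n S => [|n IH] S Hn.
  exists [::]; split=> // x w; rewrite final_set_nil /valid_force.
  have /setP/(_ w) : ~: S = set0 by apply/eqP; rewrite -cards_eq0 -leqn0.
  by rewrite !inE => ->; rewrite !andbF.
case: (pickP (fun p : T * T => valid_force e ok S p.1 p.2)) => [[x w] /= Hf|Hnone].
  have Hw : w \notin S by case/and5P: Hf.
  have [|s [Hs Hstop]] := IH (w |: S).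
    rewrite -ltnS; apply: leq_trans Hn; apply: proper_card; apply/properP.
    split; last by exists w; rewrite !inE ?eqxx.
    by apply/subsetP => y; rewrite !inE negb_or => /andP[].
  by exists ((x, w) :: s); split=> [|a b]; rewrite ?final_set_cons //= Hf.
by exists [::]; split=> // x w; rewrite final_set_nil; apply: negbT (Hnone (x, w)).
Qed.

Lemma forced_somehow ok B v : forces_all e ok B -> v \notin B ->
  exists x s, valid_seq e ok B s /\ (x, v) \in s.
Proof.
move=> Hall HvB; have [s Hex] := exists_exhaustive ok B.
have : v \in final_set B s by rewrite (Hall s Hex) inE.
rewrite mem_final_set (negbTE HvB) => /mapP[[x w] Hin /= ->].
by exists x, s; case: Hex.
Qed.

Definition stalled ok W := forall x w, ~~ valid_force e ok W x w.

Lemma valid_force_widen ok S W x w : S \subset W -> valid_force e ok S x w ->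
  w \notin W -> valid_force e ok W x w.
Proof.
move=> /subsetP SW /and5P[Hok Hx _ Hxw /forallP Huniq] HwW.
rewrite /valid_force Hok (SW _ Hx) HwW Hxw; apply/forallP => y.
apply/implyP => /andP[Hxy HyW]; have := Huniq y.
by rewrite Hxy (contra (SW y) HyW).
Qed.

Lemma stalled_final_sub ok W S s : stalled ok W -> S \subset W ->
  valid_seq e ok S s -> final_set S s \subset W.
Proof.
move=> HW; elim: s S => [|[x w] s IH] S SW /=; first by rewrite final_set_nil.
case/andP=> Hf Hs; rewrite final_set_cons; apply: IH Hs.
case: (boolP (w \in W)) => Hw; first by rewrite subUset sub1set Hw.
by have := HW x w; rewrite (valid_force_widen SW Hf Hw).
Qed.

Lemma stalled_forces_all_full ok W B : stalled ok W -> B \subset W ->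
  forces_all e ok B -> W = setT.
Proof.
move=> HW BW Hall; have [s Hex] := exists_exhaustive ok B.
apply/eqP; rewrite eqEsubset subsetT -(Hall s Hex).
by apply: stalled_final_sub HW BW _; case: Hex.
Qed.

Section Escape.
(* W is stalled under the vertex leaks L, and z is one of them whose leak
   is lifted. *)
Variables (L W : {set T}) (z : T).
Hypothesis W_stalled : stalled (vleak_ok L) W.

Lemma exit_force S a b : S \subset W ->
  valid_force e (vleak_ok (L :\ z)) S a b -> b \notin W ->
  [/\ a = z, e z b & forall y, e z y -> y \notin W -> y = b].
Proof.
move=> SW Hf HbW; have HfW := valid_force_widen SW Hf HbW.
case: (boolP (a \in L)) => HaL; last first.
  have := W_stalled a b; rewrite /valid_force /vleak_ok HaL /=.
  by move: HfW; rewrite /valid_force => /andP[_ ->].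
case/and5P: HfW => Hok _ _ Hzb /forallP Huniq.
move: Hok; rewrite /vleak_ok !inE HaL andbT negbK => /eqP Eaz; subst a.
by split=> // y Hzy HyW; have := Huniq y; rewrite Hzy HyW => /eqP.
Qed.

Definition sole_exit v0 :=
  [/\ v0 \notin W, e z v0 & forall y, e z y -> y \notin W -> y = v0].

Lemma leaving_has_sole_exit S s x v : S \subset W ->
  valid_seq e (vleak_ok (L :\ z)) S s -> (x, v) \in s -> v \notin W ->
  exists v0, sole_exit v0.
Proof.
elim: s S => [//|[a b] s IH] S SW /= /andP[Hf Hs] Hin HvW.
case: (boolP (b \in W)) => HbW; last first.
  by have [_ Hzb Hb] := exit_force SW Hf HbW; exists b.
move: Hin; rewrite in_cons => /orP[/eqP [_ Ebv]|Hin]; first by rewrite Ebv HbW in HvW.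
by apply: (IH (b |: S)) => //; rewrite subUset sub1set HbW.
Qed.

(* The sole exit v0 can only be coloured by z: the first force leaving W is
   z -> v0, and v0 is never forced again. *)
Lemma sole_exit_forced_by_z S s x v0 : S \subset W -> sole_exit v0 ->
  valid_seq e (vleak_ok (L :\ z)) S s -> (x, v0) \in s -> x = z.
Proof.
move=> + [Hv0W _ Hsole]; elim: s S => [//|[a b] s IH] S SW /= /andP[Hf Hs].
case: (boolP (b \in W)) => HbW.
  rewrite in_cons => /orP[/eqP [_ Ebv]|Hin]; first by rewrite Ebv HbW in Hv0W.
  by apply: (IH (b |: S)) => //; rewrite subUset sub1set HbW.
have [-> Hzb _] := exit_force SW Hf HbW; have Ebv := Hsole _ Hzb HbW.
rewrite in_cons => /orP[/eqP [] //|Hin].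
by have [_ _] := valid_seq_mem Hs Hin; rewrite -Ebv !inE eqxx.
Qed.

Lemma escape_unique_forcer B v : B \subset W -> v \notin W ->
  forces_all e (vleak_ok (L :\ z)) B ->
  exists v0, v0 \notin W /\ forall x, forces_set e (L :\ z) B x v0 -> x = z.
Proof.
move=> BW HvW Hall.
have [x [s [Hs Hin]]] := forced_somehow Hall (contra (subsetP BW v) HvW).
have [v0 Hv0] := leaving_has_sole_exit BW Hs Hin HvW.
exists v0; split=> [|y [t [Ht Hyt]]]; first by case: Hv0.
exact: sole_exit_forced_by_z BW Hv0 Ht Hyt.
Qed.

End Escape.
End ForcingSequences.

Section MixedLeaks.
Variable T : finType.
Implicit Types (W L : {set T}) (ls : seq (leak T)).

(* The vertex to which a leak is charged relative to the blue set W: the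
   vertex that would perform the force it blocks across the boundary of W. *)
Definition leak_source W (lk : leak T) : T :=
  match lk with
  | VertexLeak z => z
  | SpecLeak a _ => a
  | EdgeLeak a b => if a \in W then a else b
  end.

Lemma leak_source_blocks W lk x w :
  leak_blocks lk x w -> x \in W -> w \notin W -> x = leak_source W lk.
Proof.
case: lk => [z|a b|a b] /=; [by move/eqP | | by case/andP=> /eqP ->].
by case/orP=> /andP[/eqP -> /eqP ->] Hx Hw; rewrite ?Hx ?(negbTE Hw).
Qed.

Lemma blocked_charged W ls x w : ~~ mixed_ok ls x w ->
  x \in W -> w \notin W -> x \in map (leak_source W) ls.
Proof.
rewrite /mixed_ok negbK; elim: ls => [//|lk ls IH] /= /orP[Hb|Hh] Hx Hw.
  by rewrite in_cons -(leak_source_blocks Hb Hx Hw) eqxx.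
by rewrite in_cons IH ?orbT.
Qed.

Lemma mixed_ok_vertex L : mixed_ok (map (@VertexLeak T) (enum L)) =2 vleak_ok L.
Proof.
move=> x w; rewrite /mixed_ok /vleak_ok has_map; congr (~~ _).
apply/hasP/idP => [[z]|Hx]; first by rewrite mem_enum /= => Hz /eqP ->.
by exists x; rewrite ?mem_enum /=.
Qed.

Variable e : rel T.

Lemma mixed_stalled_vertex ls B s : exhaustive e (mixed_ok ls) B s ->
  let W := final_set B s in
  stalled e (vleak_ok [set x | x \in map (leak_source W) ls]) W.
Proof.
move=> [_ Hstop] W x w; apply/negP => /and5P[Hok Hx Hw Hxw Huniq].
have := Hstop x w; rewrite /valid_force Hx Hw Hxw Huniq !andbT => /negP; apply.
by apply: contraT => /blocked_charged/(_ Hx Hw) HxL; rewrite /vleak_ok inE HxL in Hok.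
Qed.

Lemma mixed_leaky_vertex_leaky l B :
  mixed_leaky_forcing_set e l B -> leaky_forcing_set e l B.
Proof.
move=> Hmixed L HL; apply: (forces_all_ext (mixed_ok_vertex L)); apply: Hmixed.
  by rewrite size_map -cardE.
by rewrite all_map; apply/allP.
Qed.

(* Forward direction: under l-1 vertex leaks, every white vertex has two
   distinct forcers, the second found by additionally forbidding the first. *)
Lemma mixed_leaky_two_forcers l B L v : 1 <= l ->
  mixed_leaky_forcing_set e l B -> #|L| = l - 1 -> v \notin B ->
  exists x y, x != y /\ forces_set e L B x v /\ forces_set e L B y v.
Proof.
move=> hl Hmixed HL HvB.
have HLl : #|L| <= l by lia.
have [x [s [Hs Hin]]] := forced_somehow (mixed_leaky_vertex_leaky Hmixed HLl) HvB.
have [_ Hxv _] := valid_seq_mem Hs Hin.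
pose ls := SpecLeak x v :: map (@VertexLeak T) (enum L).
have Hls : forces_all e (mixed_ok ls) B.
  apply: Hmixed; first by rewrite /= size_map -cardE HL; lia.
  by rewrite /= Hxv all_map; apply/allP.
have [y [t [Ht Hyt]]] := forced_somehow Hls HvB.
have [Hok _ _] := valid_seq_mem Ht Hyt.
exists x, y; split; last split.
- by apply: contraNneq Hok => <-; rewrite /mixed_ok /= !eqxx.
- by exists s.
exists t; split=> //; apply: valid_seq_mono Ht => a b.
by rewrite /mixed_ok /= negb_or -(mixed_ok_vertex L a b) => /andP[].
Qed.

Lemma two_forcers_mixed_leaky l B :
  leaky_forcing_set e (l - 1) B ->
  (forall L : {set T}, #|L| = l - 1 -> forall v, v \notin B ->
     exists x y, x != y /\ forces_set e L B x v /\ forces_set e L B y v) ->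
  mixed_leaky_forcing_set e l B.
Proof.
move=> Hleaky Htwo ls Hsize _ s Hex.
set W := final_set B s.
set L := [set x | x \in map (leak_source W) ls].
have HW : stalled e (vleak_ok L) W := mixed_stalled_vertex Hex.
have BW : B \subset W := sub_final_set B s.
have HL : #|L| <= l.
  by rewrite cardsE; apply: leq_trans (card_size _) _; rewrite size_map.
case: (leqP #|L| (l - 1)) => HLl.
  exact: stalled_forces_all_full HW BW (Hleaky L HLl).
have [z Hz] : exists z, z \in L by apply/set0Pn; rewrite -card_gt0; lia.
have HLz : #|L :\ z| = l - 1 by have := cardsD1 z L; rewrite Hz; lia.
case: (pickP (fun v => v \notin W)) => [v HvW|Hfull]; last first.
  by apply/setP => u; rewrite in_setT; move: (Hfull u) => /negbFE.
have [v0 [Hv0W Hz_only]] := escape_unique_forcer HW BW HvW (Hleaky _ (eq_leq HLz)).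
have [x [y [Hxy [Fx Fy]]]] := Htwo _ HLz v0 (contra (subsetP BW v0) Hv0W).
by rewrite (Hz_only _ Fx) (Hz_only _ Fy) eqxx in Hxy.
Qed.

End MixedLeaks.

Theorem theorem4p2 (T : finType) (e : rel T)
    (e_sym : symmetric e) (e_irr : irreflexive e)
    (B : {set T}) (l : nat) (hl : 1 <= l) :
  mixed_leaky_forcing_set e l B <->
  (leaky_forcing_set e (l - 1) B /\
   forall L : {set T}, #|L| = l - 1 ->
     forall v, v \notin B ->
       exists x y, x != y /\ forces_set e L B x v /\ forces_set e L B y v).
Proof.
split=> [Hmixed | [Hleaky Htwo]]; last exact: two_forcers_mixed_leaky.
split=> [L HL | L HL v HvB]; last exact: mixed_leaky_two_forcers Hmixed HL HvB.
have HLl : #|L| <= l by lia.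
exact: (mixed_leaky_vertex_leaky Hmixed HLl).
Qed.
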